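(* Consider the binary delegated search model described in the context. Let $w_i = y_i - c_i/p_i$ and $z_i = x_i - c_i/p_i$, and fix an ordering of the options in non-increasing order of $w_i$. For a half-infinite interval $X$ of the form $X=(\theta,\infty)$ or $X=[\theta,\infty)$ with $\theta\in\mathbb{R}$, let $M(X)$ be the single-proposal mechanism in which a proposal $\omega_i$ is accepted if and only if $\omega_i$ is feasible and $z_i\in X$. Suppose that under $M(X)$ the agent examines the options $\omega_i$ with $z_i \in X$ in the fixed order (non-increasing $w_i$) and proposes the first one found to be feasible (this is a best response of the agent to $M(X)$). Then there exists such an interval $X$ for which the expected net value of $M(X)$ to the principal (the principal's value $x_i$ of the accepted proposal, or $0$ if none is accepted, minus the total cost of all options examined by the agent) is at least one half of the maximum expected net value the principal could achieve by performing an optimal sequential search herself, without delegation.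
   Context: Binary model: there are $m$ options $\omega_1,\ldots,\omega_m$. Option $\omega_i$ is feasible with probability $p_i>0$, independently of the other options. If feasible it yields the commonly known utility $x_i\ge 0$ to the principal and $y_i$ to the agent; if infeasible it yields $0$ to both. Determining whether $\omega_i$ is feasible requires paying a cost $c_i\ge 0$, and it is assumed that $c_i\le p_i y_i$ for every $i$. In delegated search the agent adaptively chooses options to examine, paying their costs, and then proposes one option. A single-proposal mechanism accepts the proposal if it lies in a specified eligible set and otherwise the outcome is the status quo with value $0$. The agent maximizes the expected $y$-value of the accepted proposal minus his total examination costs. Self-search by the principal: the principal adaptively examines options in any order she chooses (paying their costs), stops at any time, and selects at most one examined feasible option. Her net value is the $x$-value of the selected option minus the total examination costs. *)

From mathcomp Require Import all_boot all_order all_algebra.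
Set Implicit Arguments. Unset Strict Implicit. Unset Printing Implicit Defensive.
Import Order.TTheory GRing.Theory Num.Theory.
Local Open Scope ring_scope.

(* An adaptive (deterministic) search policy over options 'I_m, as a decision
   tree: either stop and select at most one option, or examine option i and
   continue with the first subtree if i turns out feasible, the second if not. *)
Inductive policy (m : nat) : Type :=
| Stop of option 'I_m
| Exam of 'I_m & policy m & policy m.

Arguments Stop {m}.
Arguments Exam {m}.

(* A policy is admissible given the list K of options already examined and
   found feasible: it may only select an option examined and found feasible. *)
Fixpoint valid (m : nat) (t : policy m) (K : seq 'I_m) : bool :=
  match t with
  | Stop None => true
  | Stop (Some i) => i \in K
  | Exam i t1 t2 => valid t1 (i :: K) && valid t2 K
  end.

Section Values.
Variables (R : realFieldType) (m : nat).

Fixpoint payoff (x c : 'I_m -> R) (om : {ffun 'I_m -> bool}) (t : policy m) : R :=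
  match t with
  | Stop None => 0
  | Stop (Some i) => if om i then x i else 0
  | Exam i t1 t2 => - c i + (if om i then payoff x c om t1 else payoff x c om t2)
  end.

Definition prob (p : 'I_m -> R) (om : {ffun 'I_m -> bool}) : R :=
  \prod_i (if om i then p i else 1 - p i).

Definition expval (p x c : 'I_m -> R) (t : policy m) : R :=
  \sum_(om : {ffun 'I_m -> bool}) prob p om * payoff x c om t.

Definition agent_tree (s : seq 'I_m) : policy m :=
  foldr (fun i t => Exam i (Stop (Some i)) t) (Stop None) s.

Definition wval (p y c : 'I_m -> R) (i : 'I_m) : R := y i - c i / p i.
Definition zval (p x c : 'I_m -> R) (i : 'I_m) : R := x i - c i / p i.

Definition inX (strict : bool) (theta z : R) : bool :=
  if strict then theta < z else theta <= z.

Definition delegated_value (p x c : 'I_m -> R) (s : seq 'I_m)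
    (strict : bool) (theta : R) : R :=
  expval p x c (agent_tree [seq i <- s | inX strict theta (zval p x c i)]).

End Values.

From mathcomp Require Import all_boot all_order all_algebra.
From mathcomp Require Import ring lra.
Import Order.TTheory GRing.Theory Num.Theory.
Set Implicit Arguments. Unset Strict Implicit. Unset Printing Implicit Defensive.
Local Open Scope ring_scope.

(* Since c_i = p_i * (c_i / p_i), any search of the principal earns in
   expectation the x-value of its selection minus c_j / p_j for every examined
   feasible option j, hence at most z of its selection, and so at most the
   prophet's value V = E[max(0, max of z_j over feasible j)].  Under the
   threshold theta = V / 2 the agent examines exactly the options with
   z_j >= theta and proposes the first feasible one; as in the prophet
   inequality, this yields at least theta (1 - P) + P * sum_j p_j (z_j - theta),
   P being the probability that none of them is feasible, while
   V <= theta + sum_j p_j (z_j - theta).  Together these give at least V / 2,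
   whatever the examination order. *)

Section Expectation.
Variables (R : realFieldType) (m : nat) (p : 'I_m -> R).
Implicit Types (om : {ffun 'I_m -> bool}) (f g h : {ffun 'I_m -> bool} -> R).

Definition flip (i : 'I_m) om : {ffun 'I_m -> bool} :=
  [ffun j => if j == i then ~~ om i else om j].

Lemma flipK i : involutive (flip i).
Proof.
move=> om; apply/ffunP => j; rewrite !ffunE.
by case: eqP => [->|]; rewrite ?eqxx ?negbK.
Qed.

Lemma flip_id i om : flip i om i = ~~ om i.
Proof. by rewrite ffunE eqxx. Qed.

Lemma flip_neq i j om : j != i -> flip i om j = om j.
Proof. by move=> /negbTE ji; rewrite ffunE ji. Qed.

Definition indep_of (i : 'I_m) h := forall om, h (flip i om) = h om.

Definition expect f : R := \sum_om prob p om * f om.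

Lemma eq_expect f g : f =1 g -> expect f = expect g.
Proof. by move=> fg; apply: eq_bigr => om _; rewrite fg. Qed.

Lemma expect_cst k : expect (fun=> k) = k.
Proof.
rewrite /expect -mulr_suml /prob.
rewrite -(bigA_distr_bigA (fun i (b : bool) => if b then p i else 1 - p i)).
by rewrite big1 ?mul1r // => i _; rewrite big_bool /= addrC subrK.
Qed.

Lemma expectD f g : expect (fun om => f om + g om) = expect f + expect g.
Proof. by rewrite /expect -big_split; apply: eq_bigr => om _; rewrite mulrDr. Qed.

Lemma expectZ k f : expect (fun om => k * f om) = k * expect f.
Proof. by rewrite /expect mulr_sumr; apply: eq_bigr => om _; rewrite mulrCA. Qed.

Lemma expect_sum (I : Type) (r : seq I) (F : I -> {ffun 'I_m -> bool} -> R) :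
  expect (fun om => \sum_(i <- r) F i om) = \sum_(i <- r) expect (F i).
Proof.
by rewrite /expect; under eq_bigr do rewrite mulr_sumr; exact: exchange_big.
Qed.

Lemma prob_ge0 om : (forall i, 0 <= p i <= 1) -> 0 <= prob p om.
Proof.
move=> p01; apply: prodr_ge0 => i _; have /andP[p0 p1] := p01 i.
by case: (om i); rewrite ?subr_ge0.
Qed.

Lemma ler_expect f g : (forall i, 0 <= p i <= 1) ->
  (forall om, f om <= g om) -> expect f <= expect g.
Proof.
by move=> p01 fg; apply: ler_sum => om _; rewrite ler_wpM2l ?prob_ge0.
Qed.

(* Once the factor of coordinate i is split off [prob p om], the remaining
   product does not see [om i]; pairing [om] with [flip i om] does the rest. *)
Lemma expect_feasible i h : indep_of i h ->
  expect (fun om => if om i then h om else 0) = p i * expect h.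
Proof.
move=> hi; pose rest om := \prod_(j | j != i) (if om j then p j else 1 - p j).
have prob_rest om : prob p om = (if om i then p i else 1 - p i) * rest om.
  by rewrite /prob (bigD1 i).
have rest_flip om : rest (flip i om) = rest om.
  by apply: eq_bigr => j ji; rewrite flip_neq.
pose A := \sum_(om : {ffun 'I_m -> bool}) (if om i then rest om * h om else 0).
have A_infeasible : \sum_(om : {ffun 'I_m -> bool}) (if om i then 0 else rest om * h om) = A.
  rewrite /A (reindex_inj (can_inj (flipK i))); apply: eq_bigr => om _.
  by rewrite hi rest_flip flip_id; case: (om i).
have -> : expect (fun om => if om i then h om else 0) = p i * A.
  rewrite /A mulr_sumr; apply: eq_bigr => om _; rewrite prob_rest.
  by case: (om i); rewrite ?mulr0 // mulrA.
have -> : expect h = p i * A + (1 - p i) * A.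
  rewrite -{2}A_infeasible !mulr_sumr -big_split; apply: eq_bigr => om _.
  by rewrite prob_rest; case: (om i); rewrite /= ?mulr0 ?addr0 ?add0r mulrA.
by rewrite -mulrDl addrC subrK mul1r.
Qed.

Lemma expect_infeasible i h : indep_of i h ->
  expect (fun om => if om i then 0 else h om) = (1 - p i) * expect h.
Proof.
move=> hi; rewrite mulrBl mul1r -expect_feasible //.
have -> : expect h = expect (fun om => if om i then h om else 0) +
                     expect (fun om => if om i then 0 else h om).
  by rewrite -expectD; apply: eq_expect => om; case: (om i); rewrite ?addr0 ?add0r.
by rewrite addrC addKr.
Qed.

End Expectation.

Lemma sum_mem_cons (R : nmodType) (T : finType) (F : T -> R) i (K : seq T) :
  \sum_(j | j \in i :: K) F j = (if i \in K then 0 else F i) + \sum_(j | j \in K) F j.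
Proof.
case: ifP => iK; first by rewrite add0r; apply: eq_bigl => j; rewrite inE orb_idl // => /eqP->.
rewrite (bigD1 i) ?mem_head //=; congr (_ + _); apply: eq_bigl => j.
by rewrite inE; case: eqP => [->|_]; rewrite ?iK ?andbT.
Qed.

Section Search.
Variables (R : realFieldType) (m : nat) (p x c : 'I_m -> R).
Hypothesis p_range : forall i, 0 < p i <= 1.
Hypothesis c_ge0 : forall i, 0 <= c i.
Implicit Types (om : {ffun 'I_m -> bool}) (w : {ffun 'I_m -> bool} -> R).
Implicit Types (t : policy m) (E K L : seq 'I_m).

Local Notation z := (zval p x c).
Local Notation expect := (expect p).

Let p01 i : 0 <= p i <= 1.
Proof. by case/andP: (p_range i) => /ltW -> ->. Qed.

Let p_neq0 i : p i != 0.
Proof. by case/andP: (p_range i) => /lt0r_neq0. Qed.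

Let cp_ge0 i : 0 <= c i / p i.
Proof. by rewrite divr_ge0 //; case/andP: (p01 i). Qed.

(* Examining i costs c_i, which in expectation equals c_i / p_i charged only
   when i is feasible.  [cost_surplus t E om] sums the realized difference over
   the first examinations of the run (E lists the options examined so far);
   each term has mean zero given the past, since [om i] is still unseen. *)
Fixpoint cost_surplus (t : policy m) (E : seq 'I_m) om : R :=
  match t with
  | Stop _ => 0
  | Exam i t1 t2 =>
      (if i \in E then 0 else (if om i then c i / p i else 0) - c i)
      + (if om i then cost_surplus t1 (i :: E) om else cost_surplus t2 (i :: E) om)
  end.

Lemma expect_cost_surplus t E w : (forall j, j \notin E -> indep_of j w) ->
  expect (fun om => w om * cost_surplus t E om) = 0.
Proof.
elim: t E w => [o|i t1 IH1 t2 IH2] E w wE /=.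
  by under (eq_expect p) => om do rewrite mulr0; rewrite expect_cst.
pose wb b om := if om i == b then w om else 0.
have wbE b j : j \notin i :: E -> indep_of j (wb b).
  rewrite inE negb_or => /andP[ji jE] om.
  by rewrite /wb flip_neq 1?eq_sym // (wE j jE).
rewrite (eq_expect p (g := fun om => w om *
      (if i \in E then 0 else (if om i then c i / p i else 0) - c i) +
    (wb true om * cost_surplus t1 (i :: E) om +
     wb false om * cost_surplus t2 (i :: E) om))); last first.
  by move=> om; rewrite /wb; case: (om i); rewrite /= mulrDr ?mul0r ?addr0 ?add0r.
rewrite !expectD (IH1 _ _ (wbE true)) (IH2 _ _ (wbE false)) !addr0.
case iE: (i \in E).
  by under (eq_expect p) => om do rewrite mulr0; rewrite expect_cst.
have wi : indep_of i w by apply: wE; rewrite iE.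
rewrite (eq_expect p (g := fun om => (if om i then c i / p i * w om else 0) + - c i * w om)).
  rewrite expectD expect_feasible; last by move=> om; rewrite wi.
  by rewrite !expectZ mulrA mulrCA divff // mulr1 mulNr addrN.
by move=> om; case: (om i); ring.
Qed.

Definition zmax om : R := \big[Order.max/0]_(j | om j) z j.

Lemma zmax_ge0 om : 0 <= zmax om.
Proof. by apply: (big_rec (fun v => 0 <= v)) => // j v _ v0; rewrite le_max v0 orbT. Qed.

Lemma payoff_le_zmax t K E om : valid t K ->
  (forall j, j \in K -> om j) -> (forall j, j \in E -> om j -> j \in K) ->
  payoff x c om t <= zmax om + \sum_(j | j \in K) c j / p j + cost_surplus t E om.
Proof.
elim: t K E => [[i|]|i t1 IH1 t2 IH2] K E /=.
- move=> iK Kom _; rewrite Kom // addr0 -[x i](subrK (c i / p i)).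
  apply: lerD; first exact: (le_bigmax_cond _ (P := fun j => om j)) (Kom i iK).
  by rewrite (bigD1 i) //= lerDl; apply: sumr_ge0.
- by move=> *; rewrite addr0 addr_ge0 ?zmax_ge0 ?sumr_ge0.
move=> /andP[v1 v2] Kom Eom; have ci := c_ge0 i; have cpi := cp_ge0 i.
case omi: (om i).
- have := IH1 (i :: K) (i :: E) v1; rewrite sum_mem_cons.
  have Kom' j : j \in i :: K -> om j by rewrite inE => /predU1P[->|/Kom].
  have Eom' j : j \in i :: E -> om j -> j \in i :: K.
    by rewrite !inE => /predU1P[-> _|jE oj]; rewrite ?eqxx // Eom ?orbT.
  move=> /(_ Kom' Eom'); case iE: (i \in E); first by rewrite (Eom i iE omi); lra.
  by case: (i \in K); lra.
- have Eom' j : j \in i :: E -> om j -> j \in K.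
    by rewrite inE => /predU1P[->|/Eom //]; rewrite omi.
  have := IH2 K (i :: E) v2 Kom Eom'.
  by case: (i \in E) => /=; lra.
Qed.

Lemma expval_le_zmax t : valid t [::] -> expval p x c t <= expect zmax.
Proof.
move=> vt; rewrite -[expect zmax]addr0 -(@expect_cost_surplus t [::] (fun=> 1)) // -expectD.
apply: ler_expect => // om; rewrite mul1r.
by have := @payoff_le_zmax t [::] [::] om vt; rewrite big_pred0 // addr0; apply.
Qed.

Fixpoint agent_value (L : seq 'I_m) : R :=
  if L is i :: L' then p i * z i + (1 - p i) * agent_value L' else 0.

Lemma expect_agent_tree L w : uniq L -> {in L, forall j, indep_of j w} ->
  expect (fun om => w om * payoff x c om (agent_tree L)) = expect w * agent_value L.
Proof.
elim: L w => [|i L IH] w /=.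
  by move=> _ _; under (eq_expect p) => om do rewrite mulr0; rewrite expect_cst mulr0.
move=> /andP[iL uL] wL; have wi : indep_of i w by apply: wL; apply: mem_head.
pose w' om := if om i then 0 else w om.
have w'L : {in L, forall j, indep_of j w'}.
  move=> j jL om; rewrite /w' flip_neq; last by apply: contraNneq iL => ->.
  by rewrite (wL j) // inE jL orbT.
rewrite (eq_expect p (g := fun om => - c i * w om + x i * (if om i then w om else 0)
                                  + w' om * payoff x c om (agent_tree L))); last first.
  by move=> om; rewrite /w'; case: (om i) => /=; ring.
rewrite !expectD !expectZ (IH _ uL w'L) expect_feasible // expect_infeasible // /zval.
by field; apply: p_neq0.
Qed.

Lemma expval_agent_tree L : uniq L -> expval p x c (agent_tree L) = agent_value L.
Proof.
move=> uL; transitivity (expect (fun om => 1 * payoff x c om (agent_tree L))).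
  by apply: eq_expect => om; rewrite mul1r.
by rewrite expect_agent_tree // expect_cst mul1r.
Qed.

Let prod_1subp_bounds L : 0 <= \prod_(i <- L) (1 - p i) <= 1.
Proof.
elim: L => [|i L IH]; first by rewrite big_nil ler01 lexx.
have /andP[P0 P1] := IH; have /andP[p0 p1] := p01 i.
by rewrite big_cons mulr_ge0 ?mulr_ile1 ?subr_ge0 ?lerBlDr ?lerDl.
Qed.

Lemma agent_value_ge_threshold th L : (forall i, i \in L -> th <= z i) ->
  th * (1 - \prod_(i <- L) (1 - p i))
    + \prod_(i <- L) (1 - p i) * \sum_(i <- L) p i * (z i - th)
  <= agent_value L.
Proof.
elim: L => [|i L IH] thL /=; first by rewrite !big_nil subrr mulr0 mul1r addr0.
rewrite !big_cons.
have {IH} := IH (fun j jL => thL j (mem_behead (s := i :: L) jL)).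
have := prod_1subp_bounds L; have /andP[p0 p1] := p01 i.
have thi : th <= z i by rewrite thL ?mem_head.
set P := \prod_(j <- L) _; set D := \sum_(j <- L) _; set v := agent_value L.
move=> /andP[P0 P1] IH.
have h1 : 0 <= (1 - p i) * (v - (th * (1 - P) + P * D)) by rewrite mulr_ge0 ?subr_ge0.
have h2 : 0 <= p i * (z i - th) * (1 - (1 - p i) * P).
  by rewrite !mulr_ge0 ?subr_ge0 ?mulr_ile1 ?subr_ge0 ?lerBlDr ?lerDl.
(* The gap between the two sides is exactly h1 + h2. *)
lra.
Qed.

Lemma expect_zmax_le th L : 0 <= th -> uniq L -> (forall k, (k \in L) = (th <= z k)) ->
  expect zmax <= th + \sum_(i <- L) p i * (z i - th).
Proof.
move=> th0 uL memL.
have zmax_le om : zmax om <= th + \sum_(i <- L) (if om i then z i - th else 0).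
  have gap_ge0 i : i \in L -> 0 <= (if om i then z i - th else 0).
    by rewrite memL => thi; case: (om i); rewrite ?subr_ge0.
  have sum_ge0 (P : pred 'I_m) : 0 <= \sum_(i <- L | P i) (if om i then z i - th else 0).
    by rewrite big_seq_cond sumr_ge0 // => i /andP[/gap_ge0].
  apply: bigmax_le => [|k omk]; first by rewrite addr_ge0 // (sum_ge0 predT).
  case: (lerP th (z k)) => [thk|zk]; last by have := sum_ge0 predT; lra.
  rewrite (bigD1_seq k) ?memL //= omk; have := sum_ge0 (predC1 k); lra.
apply: le_trans (ler_expect p01 zmax_le) _.
rewrite expectD expect_cst expect_sum lerD2l.
by under eq_bigr => i _ do rewrite expect_feasible // expect_cst.
Qed.

Lemma half_expect_zmax_le_agent_value L : uniq L ->
  (forall k, (k \in L) = (expect zmax / 2 <= z k)) ->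
  expect zmax / 2 <= agent_value L.
Proof.
move=> uL memL; set th := expect zmax / 2.
have th0 : 0 <= th.
  by rewrite divr_ge0 // -(expect_cst p 0); apply: ler_expect => // om; apply: zmax_ge0.
have thL k : k \in L -> th <= z k by rewrite memL.
have := agent_value_ge_threshold thL.
have := expect_zmax_le th0 uL memL; have := prod_1subp_bounds L.
set P := \prod_(i <- L) _; set D := \sum_(i <- L) _.
move=> /andP[P0 P1] upper lower.
have th_le_D : th <= D by move: upper; rewrite /th; lra.
have : 0 <= P * (D - th) by rewrite mulr_ge0 ?subr_ge0.
lra.
Qed.

End Search.

Theorem mainTheorem1 (R : realFieldType) (m : nat) (p x y c : 'I_m -> R)
  (hp : forall i, 0 < p i <= 1) (hx : forall i, 0 <= x i)
  (hc : forall i, 0 <= c i) (hcy : forall i, c i <= p i * y i)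
  (s : seq 'I_m) (hs : perm_eq s (enum 'I_m))
  (hsort : sorted (fun i j => wval p y c j <= wval p y c i) s) :
  exists (strict : bool) (theta : R),
    forall t : policy m, valid t [::] ->
      expval p x c t / 2 <= delegated_value p x c s strict theta.
Proof.
(* The threshold guarantee holds for every examination order. *)
set th := expect p (zmax p x c) / 2; exists false, th => t vt.
rewrite /delegated_value; set L := filter _ s.
have uL : uniq L by rewrite filter_uniq // (perm_uniq hs) enum_uniq.
have memL k : (k \in L) = (th <= zval p x c k).
  by rewrite mem_filter (perm_mem hs) mem_enum andbT.
rewrite expval_agent_tree //; apply: le_trans (half_expect_zmax_le_agent_value hp uL memL).
by rewrite ler_pM2r ?invr_gt0 ?ltr0n // expval_le_zmax.
Qed.
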